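(* In the setting below, $C=S/\operatorname{Ann}_S(F)$ is a free extension with base $A=\mathsf{k}[t]/(t^n)$ and fiber $B=R/\operatorname{Ann}_R(F_B)$ (via $\iota,\pi$) if and only if for every $g_{n-1}\in\operatorname{Ann}_R(F_B)$ there exist $g_0,\dots,g_{n-2}\in R$ such that $t^{n-1}g_0+t^{n-2}g_1+\cdots+tg_{n-2}+g_{n-1}\in\operatorname{Ann}_S(F)$.
   Context: $\mathsf{k}$ a field, $n\ge2$, $R=\mathsf{k}[x_1,\dots,x_r]$ standard graded, $S=R[t]$; $Q_R=\mathsf{k}_{DP}[X_1,\dots,X_r]$, $Q_S=\mathsf{k}_{DP}[X_1,\dots,X_r,T]$ divided power rings with the contraction action ($x_i^s\circ X_i^{[k]}=X_i^{[k-s]}$ for $k\ge s$, else $0$; likewise $t$ on $T$). $F_B\in Q_R$ homogeneous of degree $j_B$, $G_0=F_B$, $G_i\in Q_R$ homogeneous of degree $j_B+i$ ($1\le i\le n-1$), $F=\sum_{i=0}^{n-1}T^{[n-1-i]}G_i$. $\iota:A\to C$ is induced by $\mathsf{k}[t]\subset S$ and $\pi:C\to B$ by $t\mapsto0$, $x_i\mapsto x_i$. $C$ is a free extension with base $A$ and fiber $B$ if $\iota$ makes $C$ a free $A$-module and $\pi$ is surjective with $\ker\pi=(\iota(A_+))C$. *)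

From HB Require Import structures.
From mathcomp Require Import all_boot all_order all_algebra.
Set Implicit Arguments. Unset Strict Implicit. Unset Printing Implicit Defensive.
Import GRing.Theory.
Local Open Scope ring_scope.

(* Polynomial ring k[x_1,...,x_r], realised as iterated univariate polynomials:
   P k 0 = k,  P k (r+1) = {poly P k r}  (the outermost variable is x_{r+1}).
   R = P k r, and S = R[t] = {poly P k r} = P k r.+1 (t is the outermost 'X).

   The divided power ring Q_R = k_DP[X_1,...,X_r] is, as a k-vector space,
   free on the divided monomials X^[a]; we represent it on the same carrier
   P k r, the "monomial" X^a of P k r standing for the divided monomial X^[a].
   Likewise Q_S = {poly Q_R} with 'X^j standing for T^[j].  Only the
   contraction action of R (resp. S) on Q_R (resp. Q_S) and the products
   T^[j] * G (G in Q_R), which involve no binomial factors, are used. *)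
Fixpoint P (k : fieldType) (r : nat) : comNzRingType :=
  match r with
  | 0 => k
  | r'.+1 => ({poly P k r'} : comNzRingType)
  end.

(* Contraction action  h o F  of P k r (polynomials) on P k r (divided powers):
   x^s o X^[m] = X^[m-s] if m >= s and 0 otherwise, extended bilinearly. *)
Fixpoint contr (k : fieldType) (r : nat) : P k r -> P k r -> P k r :=
  match r return P k r -> P k r -> P k r with
  | 0 => fun c F => c * F
  | r'.+1 => fun (h F : {poly P k r'}) =>
      \poly_(j < size F) \sum_(i < size h) contr h`_i F`_(i + j)
  end.

Definition Ann (k : fieldType) (r : nat) (F : P k r) (g : P k r) : Prop :=
  contr g F = 0.

Fixpoint homog (k : fieldType) (r : nat) : nat -> P k r -> bool :=
  match r return nat -> P k r -> bool with
  | 0 => fun d c => (d == 0)%N || (c == 0)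
  | r'.+1 => fun d (p : {poly P k r'}) =>
      [forall i : 'I_(size p),
         if (i <= d)%N then homog (d - i) p`_i else p`_i == 0]
  end.

Fixpoint emb (k : fieldType) (r : nat) : k -> P k r :=
  match r return k -> P k r with
  | 0 => fun c => c
  | r'.+1 => fun c => ((emb r' c)%:P : {poly P k r'})
  end.

Definition Fpoly (k : fieldType) (r n : nat) (G : nat -> P k r) : P k r.+1 :=
  \sum_(i < n) (G i)%:P * 'X^(n.-1 - i).

(* Lift to S of the image under iota of (the class in A = k[t]/(t^n) of)
   a in k[t]:  a(t) viewed in S = R[t]. *)
Definition liftA (k : fieldType) (r : nat) (a : {poly k}) : P k r.+1 :=
  map_poly (@emb k r) a.

(* "C = S/Ann_S(F) is a free extension with base A = k[t]/(t^n) and fiber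
   B = R/Ann_R(FB) via iota, pi", written out on representatives:
   elements of C are classes of h in S modulo Ann_S(F), elements of A
   classes of a in k[t] modulo (t^n), elements of B classes of b in R modulo
   Ann_R(FB); iota(a) = class of a(t), pi(class of h) = class of h(x,0) = h`_0.
   (1) C is a free A-module via iota: there is a (necessarily finite, as
       C is finite dimensional) A-basis (s_j)_{j<m}: every element is an
       A-combination of the s_j, and an A-combination vanishes in C only if
       all coefficients vanish in A (i.e. are divisible by t^n);
   (2) pi is surjective;
   (3) ker pi = (iota(A_+)) C, the ideal of C generated by iota(A_+) = (t). *)
Definition free_extension (k : fieldType) (r n : nat) (F : P k r.+1) (FB : P k r)
  : Prop :=
  [/\ (exists m (s : 'I_m -> P k r.+1),
         (forall h : P k r.+1, exists a : 'I_m -> {poly k},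
             Ann F (h - \sum_(j < m) liftA r (a j) * s j))
      /\ (forall a : 'I_m -> {poly k},
             Ann F (\sum_(j < m) liftA r (a j) * s j) ->
             forall j, 'X^n %| a j)),
      (forall b : P k r, exists h : P k r.+1,
          Ann FB ((h : {poly P k r})`_0 - b))
    & (forall h : P k r.+1,
          Ann FB ((h : {poly P k r})`_0) <->
          exists u v : P k r.+1, h = ('X : {poly P k r}) * u + v /\ Ann F v)].

From HB Require Import structures.
From mathcomp Require Import all_boot all_order all_algebra.
From mathcomp Require Import ring zify.
From Stdlib Require Import Classical.
Set Implicit Arguments.
Unset Strict Implicit.
Unset Printing Implicit Defensive.
Import GRing.Theory.
Local Open Scope ring_scope.

(* Write elements of S = R[t] as polynomials w = w_0 + w_1 t + ... in t.  Since F has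
   t-degree n - 1 with top coefficient F_B, the top coefficient of w o F is w_0 o F_B;
   so Ann_S(F) maps into Ann_R(F_B) under t |-> 0, and t^n annihilates F.  The lifting
   condition says exactly that ker pi = (t) + Ann_S(F).  Granting it, a k-basis of the
   finite-dimensional algebra B lifts to an A-basis of C: spanning by t-adic
   approximation up to t^n, freeness by peeling off one power of t at a time.
   Conversely, if ker pi = (t) C then g_(n-1) = t u + v with v in Ann_S(F), and the
   g_i are read off from u truncated below t^(n-1). *)

Section Embedding.
Variables (k : fieldType) (r : nat).

Lemma embB (a b : k) : emb r (a - b) = emb r a - emb r b.
Proof. by elim: r => //= r' ->; rewrite polyCB. Qed.

Lemma embM (a b : k) : emb r (a * b) = emb r a * emb r b.
Proof. by elim: r => //= r' ->; rewrite polyCM. Qed.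

Lemma emb1 : emb r 1 = 1 :> P k r.
Proof. by elim: r => //= r' ->. Qed.

HB.instance Definition _ := GRing.isZmodMorphism.Build k (P k r) (@emb k r) embB.
HB.instance Definition _ :=
  GRing.isMultiplicative.Build k (P k r) (@emb k r) (conj embM emb1).

End Embedding.

Section Contraction.
Variable k : fieldType.

Lemma contr0l r (F : P k r) : contr 0 F = 0.
Proof.
elim: r F => [|r IH] F /=; first by rewrite mul0r.
by apply/polyP=> j; rewrite coef_poly coef0 size_poly0 big_ord0; case: ifP.
Qed.

Lemma contr0r r (g : P k r) : contr g 0 = 0.
Proof.
elim: r g => [|r IH] g /=; first by rewrite mulr0.
by apply/polyP=> j; rewrite coef_poly size_poly0 ltn0 coef0.
Qed.

Lemma coef_contr r (h F : {poly P k r}) N j : (size h <= N)%N ->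
  (@contr k r.+1 h F)`_j = \sum_(i < N) contr h`_i F`_(i + j).
Proof.
move=> hN; rewrite /= coef_poly (big_ord_widen N (fun i => contr h`_i F`_(i + j)) hN).
rewrite big_mkcond /=; case: ltnP => jF.
  by apply: eq_bigr => i _; case: ltnP => // /leq_sizeP ->; rewrite ?contr0l.
rewrite big1 // => i _; rewrite [F`_ _]nth_default ?contr0r //.
exact: leq_trans jF (leq_addl _ _).
Qed.

Lemma contrD r (g h F : P k r) : contr (g + h) F = contr g F + contr h F.
Proof.
elim: r g h F => [|r IH] g h F /=; first by rewrite mulrDl.
apply/polyP=> j; rewrite coefD.
set N := maxn (size g) (size h).
rewrite !(@coef_contr r _ _ N) ?leq_maxl ?leq_maxr ?size_add // -big_split /=.
by apply: eq_bigr => i _; rewrite coefD IH.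
Qed.

Lemma contrZ r (c : k) (g F : P k r) : contr (emb r c * g) F = emb r c * contr g F.
Proof.
elim: r g F => [|r IH] g F /=; first by rewrite mulrA.
apply/polyP=> j; rewrite coefCM.
set N := maxn (size ((emb r c)%:P * g)) (size g).
rewrite !(@coef_contr r _ _ N) ?leq_maxl ?leq_maxr // mulr_sumr.
by apply: eq_bigr => i _; rewrite coefCM IH.
Qed.

Lemma AnnD r (F g h : P k r) : Ann F g -> Ann F h -> Ann F (g + h).
Proof. by rewrite /Ann contrD => -> ->; rewrite addr0. Qed.

Lemma AnnZ r (F g : P k r) c : Ann F g -> Ann F (emb r c * g).
Proof. by rewrite /Ann contrZ => ->; rewrite mulr0. Qed.

End Contraction.

Section BasisExtraction.
Variables (k : fieldType) (V : comNzRingType) (iota : {rmorphism k -> V}).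
Variable K : V -> Prop.
Hypotheses (K_add : forall a b, K a -> K b -> K (a + b))
           (K_scale : forall c a, K a -> K (iota c * a)).
Variables (I : finType) (u : I -> V).

Definition spans_mod (S : {set I}) :=
  forall h, exists c : I -> k, K (h - \sum_(i in S) iota (c i) * u i).

Definition free_mod (S : {set I}) :=
  forall c : I -> k, K (\sum_(i in S) iota (c i) * u i) -> forall i, i \in S -> c i = 0.

Lemma spans_mod_shrink S : spans_mod S -> ~ free_mod S ->
  exists2 S', spans_mod S' & (#|S'| < #|S|)%N.
Proof.
move=> spS nfrS.
have [c [i0 [i0S Kc ci0]]] : exists c i0,
    [/\ i0 \in S, K (\sum_(i in S) iota (c i) * u i) & c i0 != 0].
  apply: NNPP => H; apply: nfrS => c Kc i iS; apply: NNPP => ne; apply: H.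
  by exists c, i; split => //; apply/eqP.
exists (S :\ i0); last by rewrite (cardsD1 i0 S) i0S.
move=> h; have [c' Kc'] := spS h.
pose l := c' i0 / c i0.
exists (fun i => c' i - l * c i).
have split_i0 g : \sum_(i in S) iota (g i) * u i =
    iota (g i0) * u i0 + \sum_(i in S :\ i0) iota (g i) * u i.
  by rewrite (bigD1 i0) //=; congr (_ + _); apply: eq_bigl => i; rewrite in_setD1 andbC.
have -> : \sum_(i in S :\ i0) iota (c' i - l * c i) * u i =
    \sum_(i in S :\ i0) iota (c' i) * u i - iota l * \sum_(i in S :\ i0) iota (c i) * u i.
  rewrite mulr_sumr -sumrB; apply: eq_bigr => i _.
  by rewrite rmorphB rmorphM mulrBl mulrA.
have l_ci0 : iota l * iota (c i0) = iota (c' i0) by rewrite -rmorphM /l divfK.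
move: (K_add (K_scale l Kc) Kc'); rewrite !split_i0 -l_ci0.
by congr K; ring.
Qed.

Lemma spans_mod_free_subset S : spans_mod S -> exists2 S', spans_mod S' & free_mod S'.
Proof.
elim: {S}_.+1 {-2}S (ltnSn #|S|) => // N IH S ltSN spS.
have [frS|nfrS] := classic (free_mod S); first by exists S.
have [S' spS' ltS'S] := spans_mod_shrink spS nfrS.
exact: IH (leq_trans ltS'S _) spS'.
Qed.

Lemma exists_basis_mod : (forall h, exists c : I -> k, K (h - \sum_i iota (c i) * u i)) ->
  exists m (b : 'I_m -> V),
  (forall h, exists c : 'I_m -> k, K (h - \sum_j iota (c j) * b j)) /\
  (forall c : 'I_m -> k, K (\sum_j iota (c j) * b j) -> forall j, c j = 0).
Proof.
move=> spI; have [S spS frS] : exists2 S, spans_mod S & free_mod S.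
  apply: (@spans_mod_free_subset [set: I]) => h; have [c Kc] := spI h.
  by exists c; under eq_bigl do rewrite in_setT.
exists #|S|, (fun j => u (enum_val j)); split.
  move=> h; have [c Kc] := spS h; exists (fun j => c (enum_val j)).
  by rewrite big_enum_val in Kc.
move=> c' Kc' j.
pose c x := if [pick j | enum_val j == x] is Some j then c' j else 0.
have cE j0 : c (enum_val j0) = c' j0.
  by rewrite /c; case: pickP => [j1 /eqP /enum_val_inj -> //|/(_ j0)]; rewrite eqxx.
rewrite -cE; apply: frS (enum_valP j); rewrite big_enum_val.
by under eq_bigr do rewrite cE.
Qed.

End BasisExtraction.

Section FiniteSpan.
Variable k : fieldType.

Lemma Ann_coefwise r (F d : {poly P k r}) :
  (forall i j, (i + j < size F)%N -> Ann F`_(i + j) d`_i) -> @Ann k r.+1 F d.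
Proof.
move=> H; apply/polyP => j; rewrite coef0 (@coef_contr k r _ _ (size d)) //.
rewrite big1 // => i _; case: (ltnP (i + j) (size F)) => ijF; first exact: H.
by rewrite [F`_ _]nth_default ?contr0r.
Qed.

(* Contraction into F only reads the coefficients F`_i with i < size F, so the
   induction hypothesis is applied to all of them at once. *)
Lemma finite_span_mod_Ann r (Fs : seq (P k r)) :
  exists (I : finType) (u : I -> P k r), forall h, exists c : I -> k,
    forall F, F \in Fs -> Ann F (h - \sum_i emb r (c i) * u i).
Proof.
elim: r Fs => [|r IH] Fs.
  exists unit, (fun _ => 1) => h; exists (fun _ => h) => F _.
  by rewrite big_const card_unit /= addr0 mulr1 subrr /Ann /= mul0r.
pose D := (\max_(F <- Fs) size (F : {poly P k r})).+1.
pose Fs' := [seq (F : {poly P k r})`_i | F <- Fs, i <- iota 0 D].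
have [I' [u' spu']] := IH Fs'.
exists ('I_D * I')%type, (fun p : 'I_D * I' => (u' p.2)%:P * 'X^(p.1) : {poly P k r}).
move=> h.
have /fin_all_exists [f Hf] : forall i : 'I_D, exists c : I' -> k,
    forall F, F \in Fs' -> Ann F ((h : {poly P k r})`_i - \sum_l emb r (c l) * u' l).
  by move=> i; apply: spu'.
exists (fun p => f p.1 p.2) => F FFs.
pose v i := \sum_l emb r (f i l) * u' l.
have -> : \sum_(p : 'I_D * I')
      emb r.+1 (f p.1 p.2) * ((u' p.2)%:P * 'X^(p.1) : {poly P k r})
    = \poly_(i < D) v (inord i).
  rewrite poly_def -(pair_bigA _ (fun (i : 'I_D) (l : I') =>
    emb r.+1 (f i l) * ((u' l)%:P * 'X^i : {poly P k r}))) /=.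
  apply: eq_bigr => i _.
  rewrite inord_val -mul_polyC rmorph_sum mulr_suml; apply: eq_bigr => l _.
  by rewrite rmorphM mulrA.
have sFD : (size (F : {poly P k r}) <= D)%N.
  exact/leqW/(@leq_bigmax_seq _ _ xpredT
    (fun G : P k r.+1 => size (G : {poly P k r})) F FFs).
apply: Ann_coefwise => i j ijF.
have iD : (i < D)%N by apply: leq_ltn_trans (leq_addr j i) (leq_trans ijF sFD).
rewrite coefB coef_poly iD -[inord i]/(inord (Ordinal iD)) inord_val.
apply: (Hf (Ordinal iD)); apply: allpairs_f => //.
by rewrite mem_iota add0n (leq_trans ijF sFD).
Qed.

Lemma exists_basis_mod_Ann r (FB : P k r) : exists m (b : 'I_m -> P k r),
  (forall h, exists c : 'I_m -> k, Ann FB (h - \sum_j emb r (c j) * b j)) /\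
  (forall c : 'I_m -> k, Ann FB (\sum_j emb r (c j) * b j) -> forall j, c j = 0).
Proof.
have [I [u spu]] := finite_span_mod_Ann [:: FB].
apply: (@exists_basis_mod _ _ (@emb k r) (Ann FB)) => [g h|c g|h].
- exact: AnnD.
- exact: AnnZ.
- by have [c Hc] := spu h; exists c; apply: Hc; rewrite mem_head.
Qed.

End FiniteSpan.

Lemma poly_coef0_drop1 (R : nzSemiRingType) (w : {poly R}) :
  w = (w`_0)%:P + 'X * drop_poly 1 w.
Proof.
apply/polyP => i; rewrite coefD coefC coefXM coef_drop_poly.
by case: i => [|i] /=; rewrite ?addr0 ?add0r ?addn1.
Qed.

Section ContractionByT.
Variables (k : fieldType) (r : nat).
Local Notation S := {poly P k r}.
Local Notation AnnS := (@Ann k r.+1).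

Lemma coef_contr_XnM (F w : S) e j :
  (@contr k r.+1 ('X^e * w) F : S)`_j = (@contr k r.+1 w F : S)`_(j + e).
Proof.
rewrite (@coef_contr k r _ _ (e + size w)); last first.
  by apply: leq_trans (size_mul_leq _ _) _; rewrite size_polyXn addSn.
rewrite (@coef_contr k r _ _ (size w)) // big_split_ord /= big1 ?add0r.
  apply: eq_bigr => i _; rewrite coefXnM ltnNge leq_addr /= addKn.
  by congr (contr _ F`_ _); lia.
by move=> i _; rewrite coefXnM ltn_ord contr0l.
Qed.

Lemma Ann_XnM (F v : S) e : AnnS F v -> AnnS F ('X^e * v).
Proof. by move=> Fv; apply/polyP => j; rewrite coef_contr_XnM Fv !coef0. Qed.

Lemma Ann_XnM_size (F w : S) n : (size F <= n)%N -> AnnS F ('X^n * w).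
Proof.
move=> sFn; apply/polyP => j; rewrite coef_contr_XnM coef0 nth_default //=.
exact: leq_trans (size_poly _ _) (leq_trans sFn (leq_addl _ _)).
Qed.

(* Only the top coefficient F`_d of F meets the constant term of w at degree d. *)
Lemma Ann_XnM_coef0 (F w : S) d e : (size F <= d.+1)%N -> (e <= d)%N ->
  AnnS F ('X^e * w) -> Ann F`_d w`_0.
Proof.
move=> sFd ed /(congr1 (fun p : S => p`_(d - e))).
rewrite coef_contr_XnM subnK // coef0 (@coef_contr k r _ _ (size w).+1) //.
rewrite big_ord_recl big1 ?addr0 // => i _.
rewrite [F`_ _]nth_default ?contr0r //.
by apply: leq_trans sFd _; rewrite lift0 addSn ltnS leq_addl.
Qed.

End ContractionByT.

Section Fpoly.
Variables (k : fieldType) (r n : nat) (G : nat -> P k r).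

Lemma coef_Fpoly j :
  (Fpoly n G : {poly P k r})`_j = if (j < n)%N then G (n.-1 - j) else 0.
Proof.
rewrite /Fpoly coef_sum; under eq_bigr do rewrite coefCM coefXn.
case: ltnP => jn.
  have ijn : (n.-1 - j < n)%N by lia.
  rewrite (bigD1 (Ordinal ijn)) //= big1 ?addr0.
    by rewrite (_ : (j == n.-1 - (n.-1 - j))%N = true) ?mulr1 //; apply/eqP; lia.
  move=> i ne; rewrite (_ : (j == n.-1 - i)%N = false) ?mulr0 //.
  apply/negbTE; apply: contra ne => /eqP e; apply/eqP/val_inj => /=.
  by have := ltn_ord i; lia.
apply: big1 => i _; rewrite (_ : (j == n.-1 - i)%N = false) ?mulr0 //.
by apply/negbTE/eqP; have := ltn_ord i; lia.
Qed.

Lemma size_Fpoly : (size (Fpoly n G : {poly P k r}) <= n)%N.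
Proof. by apply/leq_sizeP => j jn; rewrite coef_Fpoly ltnNge jn. Qed.

End Fpoly.

Section FreeExtension.
Variables (k : fieldType) (r n : nat) (G : nat -> P k r).
Hypothesis n_gt0 : (0 < n)%N.
Local Notation S := {poly P k r}.
Local Notation F := (Fpoly n G).
Local Notation FB := (G 0%N).

Definition higher_terms (g : nat -> P k r) : S :=
  \sum_(i < n.-1) (g i)%:P * 'X^(n.-1 - i).

Definition Ann_lifts :=
  forall gl : P k r, Ann FB gl -> exists g, Ann F (higher_terms g + gl%:P).

Lemma coef0_higher_terms g : (higher_terms g)`_0 = 0.
Proof.
rewrite coef_sum big1 // => i _; rewrite coefCM coefXn.
rewrite (_ : (0 == n.-1 - i)%N = false) ?mulr0 //.
by apply/negbTE/eqP; have := ltn_ord i; lia.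
Qed.

Lemma higher_terms_X_take (u : S) :
  higher_terms (fun i => u`_((n.-1 - i).-1)) = 'X * take_poly n.-1 u.
Proof.
rewrite /take_poly poly_def mulr_sumr (reindex_inj rev_ord_inj) /=.
apply: eq_bigr => j _.
rewrite (_ : n.-1 - j = (n.-1 - j.+1).+1)%N /=; last by have := ltn_ord j; lia.
by rewrite -mul_polyC exprS mulrCA.
Qed.

Lemma Ann_XnM_top e (w : S) : (e < n)%N -> Ann F ('X^e * w) -> Ann FB w`_0.
Proof.
have top : (F : S)`_n.-1 = FB by rewrite coef_Fpoly prednK // leqnn subnn.
move=> en; rewrite -top; apply: Ann_XnM_coef0; first by rewrite prednK // size_Fpoly.
by rewrite -ltnS prednK.
Qed.

Lemma free_extension_Ann_lifts : free_extension n F FB -> Ann_lifts.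
Proof.
case=> _ _ ker gl Fgl.
have := (ker gl%:P).1; rewrite coefC => /(_ Fgl)[u [v [glE Fv]]].
exists (fun i => (- u)`_((n.-1 - i).-1)); rewrite higher_terms_X_take raddfN mulrN.
have -> : - ('X * take_poly n.-1 u) + gl%:P = v + 'X^n * drop_poly n.-1 u.
  have Xn : 'X^n = 'X * 'X^(n.-1) :> S by rewrite -exprS prednK.
  by rewrite glE -{2}(poly_take_drop n.-1 u) Xn; ring.
by apply: AnnD Fv (Ann_XnM_size _ (size_Fpoly n G)).
Qed.

Lemma Ann_lifts_ker : Ann_lifts ->
  forall h : S, Ann FB h`_0 -> exists u v : S, h = 'X * u + v /\ Ann F v.
Proof.
move=> lifts h /lifts[g Fg].
exists (drop_poly 1 h - drop_poly 1 (higher_terms g)), (higher_terms g + (h`_0)%:P).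
split => //; rewrite {1}(poly_coef0_drop1 h) {2}(poly_coef0_drop1 (higher_terms g)).
by rewrite coef0_higher_terms; ring.
Qed.

Section LiftedBasis.
Variables (m : nat) (b : 'I_m -> P k r).
Hypothesis b_span : forall h, exists c : 'I_m -> k, Ann FB (h - \sum_j emb r (c j) * b j).
Hypothesis b_free :
  forall c : 'I_m -> k, Ann FB (\sum_j emb r (c j) * b j) -> forall j, c j = 0.

Local Notation combA a := (\sum_(j < m) liftA r (a j) * ((b j)%:P : S)).

(* Correct the constant term of the error by the basis of B and push the rest one
   power of t higher; at t^n it vanishes modulo Ann_S(F). *)
Lemma lifted_basis_span : Ann_lifts -> forall h : S, exists a, Ann F (h - combA a).
Proof.
move=> lifts h.
suff approx N : exists a (w : S), Ann F (h - combA a - 'X^N * w).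
  have [a [w Fhw]] := approx n; exists a.
  by move: (AnnD Fhw (Ann_XnM_size w (size_Fpoly n G))); rewrite subrK.
elim: N => [|N [a [w Fhw]]].
  exists (fun=> 0), h; rewrite expr0 mul1r big1 => [|j _].
    by rewrite subr0 subrr; exact: contr0l.
  by rewrite /liftA map_poly0 mul0r.
have [c Fwc] := b_span w`_0.
set bc : S := \sum_j (emb r (c j))%:P * (b j)%:P.
have [u [v [wbcE Fv]]] : exists u v : S, w - bc = 'X * u + v /\ Ann F v.
  apply: Ann_lifts_ker => //; rewrite coefB coef_sum.
  by under eq_bigr do rewrite -polyCM coefC.
exists (fun j => a j + (c j)%:P * 'X^N), u.
have liftA_next : combA (fun j => a j + (c j)%:P * 'X^N) = combA a + 'X^N * bc.
  rewrite mulr_sumr -big_split; apply: eq_bigr => j _.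
  by rewrite /liftA rmorphD rmorphM /= map_polyC map_polyXn /=; ring.
move: (AnnD Fhw (Ann_XnM N Fv)); rewrite liftA_next.
by congr Ann; rewrite -[w](subrKC bc) wbcE exprS; ring.
Qed.

Lemma lifted_basis_free e a :
  (e <= n)%N -> Ann F ('X^(n - e) * combA a) -> forall j, 'X^e %| a j.
Proof.
elim: e a => [|e IH] a en Fa j; first by rewrite expr0 dvd1p.
have a0 j' : (a j')`_0 = 0.
  suff /b_free : Ann FB (\sum_j emb r (a j)`_0 * b j) by apply.
  move/Ann_XnM_top: Fa; rewrite coef_sum.
  under eq_bigr do rewrite coefMC /liftA coef_map.
  by apply; rewrite -subSn // subSS leq_subr.
have combA_X : combA a = 'X * combA (fun j => drop_poly 1 (a j)).
  rewrite mulr_sumr; apply: eq_bigr => i _.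
  by rewrite {1}(poly_coef0_drop1 (a i)) a0 add0r /liftA rmorphM /= map_polyX mulrA.
rewrite (poly_coef0_drop1 (a j)) a0 add0r exprS dvdp_mul2l ?polyX_eq0 //.
rewrite combA_X mulrA -exprSr -subSn // in Fa.
exact: IH (ltnW en) Fa j.
Qed.

End LiftedBasis.

Lemma Ann_lifts_free_extension : Ann_lifts -> free_extension n F FB.
Proof.
move=> lifts; have [m [b [b_span b_free]]] := exists_basis_mod_Ann FB.
split.
- exists m, (fun j => (b j)%:P); split; first exact: (lifted_basis_span b_span lifts).
  by move=> a Fa; apply: (lifted_basis_free b_free (leqnn n)); rewrite subnn expr0 mul1r.
- by move=> c; exists c%:P; rewrite coefC subrr; exact: contr0l.
- move=> h; split; first exact: Ann_lifts_ker.
  case=> u [v [-> Fv]]; rewrite coefD coefXM add0r.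
  by apply: (@Ann_XnM_top 0) => //; rewrite expr0 mul1r.
Qed.

End FreeExtension.

Theorem lemma2p3 (k : fieldType) (r n jB : nat) (FB : P k r) (G : nat -> P k r) :
  (2 <= n)%N ->
  homog jB FB ->
  G 0%N = FB ->
  (forall i : nat, (1 <= i <= n.-1)%N -> homog (jB + i) (G i)) ->
  free_extension n (Fpoly n G) FB <->
  (forall gl : P k r, Ann FB gl ->
     exists g : nat -> P k r,
       Ann (Fpoly n G)
         (\sum_(i < n.-1) ((g i)%:P * 'X^(n.-1 - i) : {poly P k r}) + gl%:P)).
Proof.
move=> n_ge2 _ <- _; have n_gt0 := ltnW n_ge2.
by split; [exact: free_extension_Ann_lifts | exact: Ann_lifts_free_extension].
Qed.
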